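(* For $0\le n\le m$ with $n\equiv m\pmod 2$, $$w_{m,n}(q)=\begin{cases}\dfrac{[n]!\,T_{f,n}(q^2)}{(1-q^{-2})^f}&\text{if } m=n+2f \text{ for some } f\in\mathbb N,\\ 0&\text{otherwise}.\end{cases}$$
   Context: Let $\mathbf U^\imath=\mathbb Q(q)[B]$ be the polynomial algebra in $B$ over $\mathbb Q(q)$, $[n]=(q^n-q^{-n})/(q-q^{-1})$, $[n]!=[1]\cdots[n]$. Define the PBW basis $\Delta_n\in\mathbf U^\imath$ ($n\ge0$) by $\Delta_0=1$ and $B\Delta_n=[n+1]\Delta_{n+1}+\frac{q^{n-1}}{1-q^{-2}}\Delta_{n-1}$ (with $\Delta_{-1}=0$); these form a basis of $\mathbf U^\imath$. Define $w_{m,n}(q)\in\mathbb Q(q)$ by $B^m=\sum_{n=0}^mw_{m,n}(q)\Delta_n$. For $f,n\ge0$, $T_{f,n}(q)\in\mathbb N[q]$ is the crossing generating function of chord diagrams: take $2f+n$ points labelled $1,\dots,2f+n$ clockwise on a circle after a basepoint, choose $n$ of them as endpoints of tethered chords (joined to the basepoint) and a perfect matching of the other $2f$ points into free chords; the crossing number is the number of pairs of free chords $\{a<b\},\{c<d\}$ with $a<c<b<d$ plus the number of pairs (tethered point $p$, free chord $\{a<b\}$) with $a<p<b$; $T_{f,n}(q)=\sum_{D}q^{\mathrm{cr}(D)}$ over all such diagrams $D$. *)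

From HB Require Import structures.
From mathcomp Require Import all_boot all_order all_algebra fraction.
Set Implicit Arguments. Unset Strict Implicit. Unset Printing Implicit Defensive.
Import Order.TTheory GRing.Theory Num.Theory.
Local Open Scope ring_scope.

Definition K : fieldType := {fraction {poly rat}}.
Definition q : K := tofrac ('X : {poly rat}).

Definition qint (n : nat) : K := (q ^+ n - q ^- n) / (q - q^-1).
Definition qfact (n : nat) : K := \prod_(i < n) qint i.+1.

(* U^i = Q(q)[B], modelled as {poly K} with B = 'X. *)
Definition Ui := {poly K}.
Definition B : Ui := 'X.

(* (Delta_n, Delta_{n-1}) computed from
   B Delta_n = [n+1] Delta_{n+1} + q^{n-1}/(1-q^{-2}) Delta_{n-1}. *)
Fixpoint DeltaPair (n : nat) : Ui * Ui :=
  match n with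
  | 0 => (1, 0)
  | n'.+1 =>
      let (d, dm) := DeltaPair n' in
      ((qint n'.+1)^-1 *: (B * d - ((q ^+ n' / q) / (1 - q ^- 2)) *: dm), d)
  end.
Definition Delta (n : nat) : Ui := (DeltaPair n).1.

(* Chord diagrams on the points 0..N-1 (i.e. 1..N shifted), N = 2f+n:
   an involution p; fixed points are tethered points, 2-cycles are free chords. *)
Arguments DeltaPair n : clear implicits.
Definition chord_diagram (f n : nat) (p : {ffun 'I_(2 * f + n) -> 'I_(2 * f + n)}) : bool :=
  [forall x, p (p x) == x] && (#|[set x | p x == x]| == n).

Definition crossings (N : nat) (p : {ffun 'I_N -> 'I_N}) : nat :=
  #|[set abcd : 'I_N * 'I_N * 'I_N * 'I_N |
      let: (a, b, c, d) := abcd in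
      [&& p a == b, p c == d, (a < c)%N, (c < b)%N & (b < d)%N]]|
  + #|[set tab : 'I_N * 'I_N * 'I_N |
      let: (t, a, b) := tab in
      [&& p t == t, p a == b, (a < t)%N & (t < b)%N]]|.

Definition T_eval (f n : nat) (x : K) : K :=
  \sum_(p : {ffun 'I_(2 * f + n) -> 'I_(2 * f + n)} | @chord_diagram f n p)
     x ^+ crossings p.

(* Write C_{N,k}(x) for the crossing generating function of the chord diagrams on N points with
   k tethered points, so that T_{f,n} = C_{2f+n,n}.  Removing the last point N of a diagram
   either deletes a tethered point or turns the chord ending at N into a tether; conversely a
   diagram on N+1 points is a diagram on N points together with the partner of N, which is
   either the base point or one of its tethered points, and joining N to the j-th tethered
   point from the right creates j - 1 new crossings.  Hence
     C_{N+1,k} = C_{N,k-1} + (1 + x + ... + x^k) C_{N,k+1}.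
   As 1 + q^2 + ... + q^(2n) = q^n [n+1], the numbers [n]! C_{m,n}(q^2) / (1 - q^-2)^((m-n)/2)
   obey the recursion that B Delta_n = [n+1] Delta_{n+1} + q^(n-1)/(1-q^-2) Delta_{n-1} imposes
   on the coefficients of B^m, and these coefficients are unique since Delta_n has degree n
   and leading coefficient 1/[n]!. *)

From HB Require Import structures.
From mathcomp Require Import all_boot all_order all_algebra fraction.
From mathcomp Require Import zify ring.
Import Order.TTheory GRing.Theory Num.Theory.
Local Open Scope ring_scope.
Set Implicit Arguments. Unset Strict Implicit. Unset Printing Implicit Defensive.

Definition involution N (p : {ffun 'I_N -> 'I_N}) : bool := [forall i, p (p i) == i].

Definition fix_count N (p : {ffun 'I_N -> 'I_N}) : nat := #|[set i | p i == i]|.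

Lemma card_set_sum (T : finType) (P : pred T) : #|[set x | P x]| = (\sum_x P x)%N.
Proof. by rewrite -sum1_card big_mkcond; apply: eq_bigr => x _; rewrite inE; case: (P x). Qed.

Section NatExtension.
Local Open Scope nat_scope.
Variables (N : nat) (p : {ffun 'I_N -> 'I_N}).

(* [p] extended by the identity beyond [N], so that diagrams on different numbers of points
   can be compared as functions on [nat]. *)
Definition natf (n : nat) : nat :=
  if insub n is Some i then val (p i) else n.

Lemma natfE (i : 'I_N) : natf i = p i.
Proof. by rewrite /natf valK. Qed.

Lemma natf_id n : N <= n -> natf n = n.
Proof. by move=> le_Nn; rewrite /natf insubF // ltnNge le_Nn. Qed.

Lemma natf_lt n : n < N -> natf n < N.
Proof. by move=> lt_nN; rewrite /natf; case: insubP => [i _ _|]; rewrite ?ltn_ord ?lt_nN. Qed.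

Lemma natf_involutiveP : reflect (involutive natf) (involution p).
Proof.
apply: (iffP forallP) => [pK n | natfK i].
  have [lt_nN | le_Nn] := ltnP n N; last by rewrite !natf_id.
  by rewrite -[n]/(val (Ordinal lt_nN)) !natfE (eqP (pK _)).
by apply/eqP/val_inj; rewrite /= -!natfE natfK.
Qed.

Lemma fix_count_natf : fix_count p = \sum_(0 <= n < N) (natf n == n).
Proof.
by rewrite /fix_count card_set_sum big_mkord; apply: eq_bigr => i _; rewrite natfE val_eqE.
Qed.

End NatExtension.

Lemma eq_ffun_natf N (p p' : {ffun 'I_N -> 'I_N}) :
  (forall n, n < N -> natf p n = natf p' n)%N -> p = p'.
Proof. by move=> eq_pp'; apply/ffunP => i; apply: val_inj; rewrite /= -!natfE eq_pp'. Qed.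

Section CrossCount.
Local Open Scope nat_scope.

Definition cross_pair (g : nat -> nat) (a c : nat) : nat :=
  [&& a < c, c < g a & g a < g c] + [&& g c == c, a < c & c < g a].

Definition cross_count (N : nat) (g : nat -> nat) : nat :=
  \sum_(0 <= a < N) \sum_(0 <= c < N) cross_pair g a c.

Lemma crossings_natf N (p : {ffun 'I_N -> 'I_N}) : crossings p = cross_count N (natf p).
Proof.
pose chords := [set ac : 'I_N * 'I_N | [&& ac.1 < ac.2, ac.2 < p ac.1 & p ac.1 < p ac.2]].
pose tethers := [set ac : 'I_N * 'I_N | [&& p ac.2 == ac.2, ac.1 < ac.2 & ac.2 < p ac.1]].
have chord_inj : injective (fun ac : 'I_N * 'I_N => (ac.1, p ac.1, ac.2, p ac.2)).
  by move=> [a c] [a' c'] [-> _ ->].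
have tether_inj : injective (fun ac : 'I_N * 'I_N => (ac.2, ac.1, p ac.1)).
  by move=> [a c] [a' c'] [-> ->].
have -> : cross_count N (natf p) = #|chords| + #|tethers|.
  rewrite /cross_count big_mkord (eq_bigr _ (fun a _ => big_mkord _ _)) pair_bigA.
  rewrite big_split !card_set_sum /=.
  by congr (_ + _); apply: eq_bigr => -[a c] _; rewrite /cross_pair !natfE.
rewrite /crossings -(card_imset chords chord_inj) -(card_imset tethers tether_inj).
congr (_ + _); apply: eq_card.
  move=> [[[a b] c] d]; rewrite inE; apply/idP/imsetP => [|[[a' c'] + [-> -> -> ->]]].
    by case/and5P=> /eqP<- /eqP<- ac cb bd; exists (a, c); rewrite // inE /= ac cb bd.
  by rewrite inE /= !eqxx.
move=> [[t a] b]; rewrite inE; apply/idP/imsetP => [|[[a' t'] + [-> -> ->]]].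
  by case/and4P=> /eqP pt /eqP<- lt_at lt_tb; exists (a, t); rewrite // inE /= pt lt_at lt_tb eqxx.
by rewrite inE /= !eqxx => /and3P[-> -> ->].
Qed.

Lemma eq_cross_count N (g h : nat -> nat) :
  (forall n, n < N -> g n = h n) -> cross_count N g = cross_count N h.
Proof.
move=> eq_gh; apply: eq_big_nat => a /andP[_ lt_aN]; apply: eq_big_nat => c /andP[_ lt_cN].
by rewrite /cross_pair !eq_gh.
Qed.

Lemma cross_countS N (h : nat -> nat) :
  (forall n, n < N -> h n <= N) -> cross_count N.+1 h = cross_count N h.
Proof.
move=> le_hN; rewrite /cross_count big_nat_recr //=.
rewrite [X in _ + X]big_nat_cond [X in _ + X]big1 ?addn0 => [|c]; last by rewrite /cross_pair; lia.
apply: eq_big_nat => a /andP[_ lt_aN]; rewrite big_nat_recr //=.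
by have := le_hN a lt_aN; rewrite /cross_pair; lia.
Qed.

Lemma sum_pred1_nat (a N : nat) : \sum_(0 <= n < N) (n == a) = (a < N).
Proof.
rewrite (eq_bigr (fun n => if n == a then 1 else 0)) => [|n _]; last by case: (n == a).
by rewrite -big_mkcond big_nat1_eq; case: (a < N).
Qed.

Section AttachToBase.
Variables (N a : nat) (g h : nat -> nat).
Hypotheses (le_aN : a <= N) (g_a : g a = a) (g_lt : forall n, n < N -> g n < N).
Hypothesis h_def : forall n, n < N -> h n = if n == a then N else g n.

Lemma cross_pair_attach b c : b < N -> c < N ->
  cross_pair h b c = cross_pair g b c + (b == a) * ((g c == c) && (a < c)).
Proof.
move=> lt_bN lt_cN; rewrite /cross_pair !h_def //.
have := g_lt lt_bN; have := g_lt lt_cN.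
by case: (eqVneq b a) => [->|]; case: (eqVneq c a) => [->|]; rewrite ?g_a ?eqxx /=; lia.
Qed.

(* Making the tethered point [a] the left end of a chord to the new last point keeps every
   crossing (a tether crossing a chord becomes a chord crossing it) and adds one crossing
   per tethered point to the right of [a]. *)
Lemma cross_count_attach :
  cross_count N h = cross_count N g + \sum_(0 <= c < N) ((g c == c) && (a < c)).
Proof.
have [lt_aN | ge_aN] := ltnP a N; last first.
  rewrite [X in _ + X]big_nat_cond big1 ?addn0 => [|c]; last by lia.
  by apply: eq_cross_count => n lt_nN; rewrite h_def // ifN //; lia.
set S := \sum_(0 <= c < N) _.
transitivity (\sum_(0 <= b < N) (\sum_(0 <= c < N) cross_pair g b c + (b == a) * S)).
  apply: eq_big_nat => b /andP[_ lt_bN]; rewrite big_distrr -big_split /=.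
  by apply: eq_big_nat => c /andP[_ lt_cN]; apply: cross_pair_attach.
by rewrite big_split -big_distrl /= sum_pred1_nat lt_aN mul1n.
Qed.

End AttachToBase.
End CrossCount.

Lemma sum_expr_rank (R : pzSemiRingType) (P : pred nat) (N : nat) (x : R) :
  \sum_(0 <= a < N | P a) x ^+ (\sum_(0 <= c < N) (P c && (a < c)))%N
  = \sum_(0 <= i < \sum_(0 <= c < N) P c) x ^+ i.
Proof.
elim: N => [|N IH]; first by rewrite !big_geq.
have rank_last : (\sum_(0 <= c < N.+1) (P c && (N < c)) = 0)%N.
  by rewrite big_nat_cond big1 // => c; lia.
rewrite big_mkcond /= big_nat_recr //= rank_last [in RHS]big_nat_recr //=.
under eq_big_nat => a /andP[_ lt_aN] do rewrite big_nat_recr //= lt_aN andbT.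
case: (P N) => /=.
- rewrite addn1 big_nat_recl //= expr0 addrC; congr (_ + _).
  under [RHS]eq_bigr => i _ do rewrite exprS.
  rewrite -mulr_sumr -IH [in RHS]big_mkcond /= mulr_sumr; apply: eq_bigr => a _.
  by case: (P a); rewrite ?mulr0 // addn1 exprS.
- rewrite addn0 addr0 -IH [in RHS]big_mkcond /=; apply: eq_bigr => a _.
  by rewrite addn0.
Qed.

Section JoinRestrict.
Local Open Scope nat_scope.
Variable N : nat.
Implicit Types (p : {ffun 'I_N -> 'I_N}) (P : {ffun 'I_N.+1 -> 'I_N.+1}) (a : 'I_N.+1).

Definition join p a : {ffun 'I_N.+1 -> 'I_N.+1} :=
  [ffun i : 'I_N.+1 => inord (if i == a then N else if val i == N then val a else natf p i)].

Definition restrict P : {ffun 'I_N -> 'I_N} := [ffun i : 'I_N => odflt i (insub (natf P i))].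

Lemma natf_join p a n :
  natf (join p a) n = if n == a then N else if n == N then val a else natf p n.
Proof.
have le_aN : a <= N := ltn_ord a.
have [le_nN | lt_Nn] := leqP n N; last first.
  by rewrite natf_id // !ifN ?natf_id //; lia.
rewrite -[n]/(val (Ordinal (le_nN : n < N.+1))) natfE ffunE inordK //=.
by case: ifP => // _; case: ifP => // /negbT ne_nN; apply: ltnW; apply: natf_lt; lia.
Qed.

Lemma natf_restrict P n :
  natf (restrict P) n = if (n < N) && (natf P n < N) then natf P n else n.
Proof.
have [lt_nN | le_Nn] := ltnP n N; last by rewrite natf_id.
rewrite -[n]/(val (Ordinal lt_nN)) natfE ffunE /=.
by case: insubP => [i -> <- // | /negbTE->].
Qed.

Lemma join_ord_max p a : join p a ord_max = a.
Proof. by apply: val_inj; rewrite /= -natfE natf_join eqxx; case: eqVneq. Qed.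

Lemma restrict_join p a : natf p a = a -> restrict (join p a) = p.
Proof.
move=> p_a; apply: eq_ffun_natf => n lt_nN; have ne_nN : (n == N) = false by lia.
rewrite natf_restrict natf_join lt_nN ne_nN /=.
by case: eqVneq => [-> | _]; rewrite ?ltnn ?p_a ?natf_lt.
Qed.

Section Involutive.
Variable P : {ffun 'I_N.+1 -> 'I_N.+1}.
Hypothesis PK : involutive (natf P).

Lemma natf_restrict_partner : natf (restrict P) (P ord_max) = P ord_max.
Proof. by rewrite natf_restrict -natfE PK ltnn andbF. Qed.

Lemma join_restrict : join (restrict P) (P ord_max) = P.
Proof.
apply: eq_ffun_natf => n lt_nSN; rewrite natf_join natf_restrict -natfE.
case: eqVneq => [-> | ne_n]; first by rewrite PK.
case: eqVneq => [-> | ne_nN]; first by rewrite (natfE P ord_max).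
have lt_nN : n < N by lia.
suff lt_PnN : natf P n < N by rewrite lt_nN lt_PnN.
have := natf_lt P lt_nSN; rewrite ltnS leq_eqVlt => /predU1P[eq_PnN | //].
by case/eqP: ne_n; rewrite -(PK n) eq_PnN.
Qed.

Lemma restrict_involutive : involutive (natf (restrict P)).
Proof.
move=> n; rewrite [natf (restrict P) n]natf_restrict.
case: ifP => [/andP[lt_nN lt_PnN] | not_moved]; rewrite natf_restrict ?not_moved //.
by rewrite PK lt_PnN lt_nN.
Qed.

End Involutive.

Lemma join_involutive p a : involutive (natf p) -> natf p a = a -> involutive (natf (join p a)).
Proof.
move=> pK p_a n; rewrite [natf (join p a) n]natf_join.
case: eqVneq => [-> | ne_na]; first by rewrite natf_join eqxx; case: ifP => // /eqP; apply.
case: eqVneq => [-> | ne_nN]; first by rewrite natf_join eqxx.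
rewrite natf_join; have [lt_nN | le_Nn] := ltnP n N.
  have ne_pn_a : natf p n != a by apply: contra_neq ne_na => pn_a; rewrite -(pK n) pn_a p_a.
  by rewrite (negbTE ne_pn_a) ifN ?pK //; have := natf_lt p lt_nN; lia.
have := ltn_ord a; rewrite !natf_id // !ifN //; lia.
Qed.

Lemma fix_count_join p a :
  natf p a = a -> fix_count (join p a) + (a < N) = fix_count p + (a == N :> nat).
Proof.
move=> p_a; rewrite !fix_count_natf big_nat_recr //= -(sum_pred1_nat a N).
rewrite addnAC -big_split /= natf_join eqxx; congr (_ + _).
  apply: eq_big_nat => n /andP[_ lt_nN]; have ne_nN : (n == N) = false by lia.
  rewrite natf_join ne_nN; move: p_a; case: (eqVneq n a) => [<- p_n | _ _].
    by rewrite p_n eqxx eq_sym ne_nN.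
  by rewrite addn0.
by case: (eqVneq N a) => [_ | ne_Na]; rewrite ?eqxx // eq_sym (negbTE ne_Na).
Qed.

Lemma crossings_join p a : natf p a = a ->
  crossings (join p a) = crossings p + \sum_(0 <= c < N) ((natf p c == c) && (a < c)).
Proof.
move=> p_a; rewrite !crossings_natf cross_countS => [|n lt_nN]; last first.
  by rewrite -ltnS natf_lt // ltnS ltnW.
apply: cross_count_attach => [||n lt_nN|n lt_nN] //.
- by rewrite -ltnS ltn_ord.
- exact: natf_lt.
- by rewrite natf_join (_ : n == N = false) //; lia.
Qed.

End JoinRestrict.

Section ChordSum.
Variable R : comPzSemiRingType.
Implicit Types (x : R) (N k : nat).

Definition chord_sum N k x : R :=
  \sum_(p : {ffun 'I_N -> 'I_N} | involution p && (fix_count p == k)) x ^+ crossings p.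

Lemma chord_sum0 k x : chord_sum 0 k x = (k == 0%N)%:R.
Proof.
rewrite /chord_sum (eq_bigl (fun _ => k == 0%N)) => [|p]; last first.
  have -> : involution p by apply/forallP => -[].
  by rewrite fix_count_natf big_geq // eq_sym.
rewrite (eq_bigr (fun _ => 1)) => [|p _]; last by rewrite crossings_natf /cross_count big_geq.
have [_ | _] := eqVneq k 0%N; last by rewrite big_pred0.
by rewrite (@sumr_const _ _ predT) card_ffun !card_ord.
Qed.

Lemma chord_sum_join N k x :
  chord_sum N.+1 k x =
  \sum_(p | involution p)
     \sum_(a : 'I_N.+1 | (natf p a == a) && (fix_count (join p a) == k)) x ^+ crossings (join p a).
Proof.
rewrite /chord_sum (reindex_onto (fun pa => join pa.1 pa.2) (fun P => (restrict P, P ord_max))) /=.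
  rewrite pair_big_dep /=; apply: eq_bigl => -[p a] /=; apply/idP/idP.
    case/andP=> /andP[/natf_involutiveP JK fcJ] /eqP[eq_p eq_a].
    have := natf_restrict_partner JK; rewrite eq_p eq_a => ->.
    rewrite eqxx fcJ -eq_p !andbT; apply/natf_involutiveP; exact: restrict_involutive.
  case/and3P=> /natf_involutiveP pK p_a fcJ.
  rewrite fcJ restrict_join ?(eqP p_a) // join_ord_max eqxx !andbT.
  by apply/natf_involutiveP; apply: join_involutive => //; apply/eqP.
by move=> P /andP[/natf_involutiveP PK _]; rewrite join_restrict.
Qed.

Lemma sum_crossings_join_tether N (p : {ffun 'I_N -> 'I_N}) x :
  \sum_(a : 'I_N | p a == a) x ^+ crossings (join p (widen_ord (leqnSn N) a))
  = x ^+ crossings p * \sum_(0 <= i < fix_count p) x ^+ i.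
Proof.
rewrite fix_count_natf -sum_expr_rank mulr_sumr big_mkord.
apply: eq_big => [a | a /eqP p_a]; first by rewrite natfE val_eqE.
by rewrite crossings_join ?natfE ?p_a // exprD.
Qed.

Lemma sum_join_fixed N (p : {ffun 'I_N -> 'I_N}) k x :
  \sum_(a : 'I_N.+1 | (natf p a == a) && (fix_count (join p a) == k)) x ^+ crossings (join p a)
  = (if (fix_count p).+1 == k then x ^+ crossings p else 0)
  + (if fix_count p == k.+1 then (\sum_(0 <= i < k.+1) x ^+ i) * x ^+ crossings p else 0).
Proof.
have p_N : natf p (@ord_max N) = @ord_max N by rewrite natf_id.
have fix_tether (i : 'I_N) :
    p i = i -> (fix_count (join p (widen_ord (leqnSn N) i))).+1 = fix_count p.
  move=> p_i; have := @fix_count_join N p (widen_ord (leqnSn N) i).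
  by rewrite /= natfE p_i ltn_ord (ltn_eqF (ltn_ord i)) addn1 addn0; apply.
rewrite big_mkcond big_ord_recr /= addrC -big_mkcond /=; congr (_ + _).
  have := fix_count_join p_N; rewrite /= ltnn eqxx addn0 addn1 => ->.
  rewrite (crossings_join p_N) [X in (_ + X)%N]big_nat_cond big1 ?addn0 ?natf_id ?eqxx // => c.
  by rewrite /=; lia.
case: ifP => [/eqP fix_p | fix_p].
  rewrite mulrC -fix_p -sum_crossings_join_tether; apply: eq_bigl => i.
  by rewrite natfE val_eqE; case: eqP => //= /fix_tether; rewrite fix_p => -[->]; rewrite eqxx.
apply: big_pred0 => i; rewrite natfE val_eqE; case: eqP => //= /fix_tether fix_i.
by apply/negbTE; apply: contraFneq fix_p => <-; rewrite -fix_i.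
Qed.

Lemma chord_sumS N k x :
  chord_sum N.+1 k x =
  (if k is k'.+1 then chord_sum N k' x else 0) + (\sum_(0 <= i < k.+1) x ^+ i) * chord_sum N k.+1 x.
Proof.
rewrite chord_sum_join (eq_bigr _ (fun p _ => sum_join_fixed p k x)) big_split /=.
congr (_ + _).
  by case: k => [|k]; [rewrite big1 | rewrite /chord_sum big_mkcondr].
rewrite /chord_sum big_mkcondr mulr_sumr.
by apply: eq_bigr => p _; case: ifP; rewrite ?mulr0.
Qed.

Lemma chord_sum_gt N k x : (N < k)%N -> chord_sum N k x = 0.
Proof.
elim: N k => [|N IH] k lt_Nk; first by rewrite chord_sum0; case: k lt_Nk.
rewrite chord_sumS IH ?mulr0 ?addr0 //; last by lia.
by case: k lt_Nk => // k lt_Nk; rewrite IH.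
Qed.

End ChordSum.

Lemma q_neq0 : q != 0.
Proof. by rewrite tofrac_eq0 polyX_eq0. Qed.

Lemma qX_neq1 n : (0 < n)%N -> q ^+ n != 1.
Proof.
move=> n_gt0; rewrite -tofracXn -tofrac1 tofrac_eq.
apply: contraTneq n_gt0 => Xn_eq1.
by have := size_polyXn rat n; rewrite Xn_eq1 size_poly1 => -[<-].
Qed.

Lemma qX_sub_qVX_neq0 n : (0 < n)%N -> q ^+ n - q ^- n != 0.
Proof.
move=> n_gt0; rewrite subr_eq0; have : (0 < n + n)%N by rewrite addn_gt0 n_gt0.
move/qX_neq1; apply: contraNneq => qn_eq.
by rewrite exprD {1}qn_eq mulVf // expf_neq0 // q_neq0.
Qed.

Lemma qint0 : qint 0 = 0.
Proof. by rewrite /qint expr0 invr1 subrr mul0r. Qed.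

Lemma qint_neq0 n : qint n.+1 != 0.
Proof. by rewrite mulf_neq0 ?invr_eq0 ?qX_sub_qVX_neq0 //; exact: (@qX_sub_qVX_neq0 1). Qed.

Lemma qfact_neq0 n : qfact n != 0.
Proof. by apply/prodf_neq0 => i _; apply: qint_neq0. Qed.

Lemma qfactS n : qfact n.+1 = qfact n * qint n.+1.
Proof. by rewrite /qfact big_ord_recr. Qed.

Lemma one_sub_qV2_neq0 : 1 - q ^- 2 != 0.
Proof. by rewrite subr_eq0 eq_sym invr_eq1 qX_neq1. Qed.

Lemma geometric_sum_sqr (F : fieldType) (y : F) n : y != 0 -> y ^+ 2 != 1 ->
  \sum_(0 <= i < n.+1) (y ^+ 2) ^+ i = y ^+ n * ((y ^+ n.+1 - y ^- n.+1) / (y - y^-1)).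
Proof.
move=> y_neq0 y2_neq1; have y21_neq0 : y ^+ 2 - 1 != 0 by rewrite subr_eq0.
apply: (mulfI y21_neq0); rewrite big_mkord -subrX1 -exprM mulnC exprM !exprS expr0 mulr1.
by field; rewrite y_neq0 -expr2 y21_neq0 expf_neq0.
Qed.

Lemma sum_q2X n : \sum_(0 <= i < n.+1) (q ^+ 2) ^+ i = q ^+ n * qint n.+1.
Proof. exact: geometric_sum_sqr q_neq0 (qX_neq1 _). Qed.

Definition Delta_lower (n : nat) : K := q ^+ n / q / (1 - q ^- 2).

Lemma DeltaS n : Delta n.+1 = (qint n.+1)^-1 *: (B * Delta n - Delta_lower n *: (DeltaPair n).2).
Proof. by rewrite /Delta /=; case: DeltaPair. Qed.

Lemma DeltaPair_snd n : (DeltaPair n.+1).2 = Delta n.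
Proof. by rewrite /Delta /=; case: DeltaPair. Qed.

Lemma mulB_Delta n : B * Delta n = qint n.+1 *: Delta n.+1 + Delta_lower n *: (DeltaPair n).2.
Proof. by rewrite DeltaS scalerA mulfV ?qint_neq0 // scale1r subrK. Qed.

Lemma Delta0 : Delta 0 = 1.
Proof. by []. Qed.

Lemma DeltaPair0_snd : (DeltaPair 0).2 = 0.
Proof. by []. Qed.

Lemma size_lead_Delta n :
  [/\ (size (Delta n) <= n.+1)%N, (Delta n)`_n = (qfact n)^-1 & (size (DeltaPair n).2 <= n)%N].
Proof.
elim: n => [|n [size_D lead_D size_prev]].
  split.
  - by rewrite Delta0 size_poly1.
  - by rewrite Delta0 coef1 eqxx /qfact big_ord0 invr1.
  - by rewrite DeltaPair0_snd size_poly0.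
rewrite DeltaPair_snd; split => //.
- rewrite DeltaS; apply: leq_trans (size_scale_leq _ _) _; apply: leq_trans (size_polyD _ _) _.
  rewrite size_polyN geq_max; apply/andP; split.
    by apply: leq_trans (size_polyMleq _ _) _; rewrite size_polyX; lia.
  exact: leq_trans (size_scale_leq _ _) (leq_trans size_prev (leqW (leqnSn n))).
- rewrite DeltaS coefZ coefB coefZ coefXM lead_D nth_default ?(leq_trans size_prev) //.
  by rewrite mulr0 subr0 qfactS [RHS]invfM mulrC.
Qed.

Lemma coef_sum_Delta m (c : nat -> K) : (\sum_(n < m.+1) c n *: Delta n)`_m = c m / qfact m.
Proof.
have [_ lead_m _] := size_lead_Delta m.
rewrite coef_sum big_ord_recr /= coefZ lead_m big1 ?add0r // => n _.
have [size_n _ _] := size_lead_Delta n.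
by rewrite coefZ nth_default ?mulr0 // (leq_trans size_n).
Qed.

Lemma Delta_sum_eq0 m (c : nat -> K) :
  \sum_(n < m.+1) c n *: Delta n = 0 -> forall n, (n <= m)%N -> c n = 0.
Proof.
have top k : \sum_(n < k.+1) c n *: Delta n = 0 -> c k = 0.
  move=> sum_eq0; apply/eqP; have := coef_sum_Delta k c.
  by rewrite sum_eq0 coef0 => /esym/eqP; rewrite mulf_eq0 invr_eq0 (negbTE (qfact_neq0 k)) orbF.
elim: m => [|m IH] sum_eq0 n; first by rewrite leqn0 => /eqP->; apply: top.
rewrite leq_eqVlt => /predU1P[-> | lt_nm]; first exact: top.
have c_top := top _ sum_eq0.
by move: sum_eq0; rewrite big_ord_recr /= c_top scale0r addr0 => /IH; apply.
Qed.

Definition chord_coef (m n : nat) : K :=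
  qfact n * chord_sum m n (q ^+ 2) / (1 - q ^- 2) ^+ ((m - n)./2).

Lemma chord_coef_gt m n : (m < n)%N -> chord_coef m n = 0.
Proof. by move=> lt_mn; rewrite /chord_coef chord_sum_gt // mulr0 mul0r. Qed.

Lemma chord_coefS m n :
  chord_coef m.+1 n = qint n * chord_coef m n.-1 + Delta_lower n.+1 * chord_coef m n.+1.
Proof.
rewrite /chord_coef chord_sumS mulrDr mulrDl; congr (_ + _).
  case: n => [|n]; first by rewrite qint0 mulr0 !mul0r.
  by rewrite qfactS subSS; ring.
have [lt_mn | le_nm] := ltnP m n.+1; first by rewrite chord_sum_gt // !(mulr0, mul0r).
have -> : ((m.+1 - n)./2 = ((m - n.+1)./2).+1)%N.
  by rewrite (_ : m.+1 - n = (m - n.+1).+2)%N //; lia.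
rewrite sum_q2X qfactS /Delta_lower [q ^+ n.+1]exprSr mulfK ?q_neq0 //.
set D := 1 - q ^- 2; rewrite [D ^+ _.+1]exprSr invfM; ring.
Qed.

Lemma expB_Delta m : B ^+ m = \sum_(n < m.+1) chord_coef m n *: Delta n.
Proof.
elim: m => [|m IH].
  rewrite expr0 big_ord1 /chord_coef chord_sum0 eqxx expr0 invr1 Delta0.
  by rewrite /qfact big_ord0 !mulr1 scale1r.
rewrite exprS IH mulr_sumr.
under eq_bigr => n _ do rewrite -scalerAr mulB_Delta scalerDr !scalerA.
under [in RHS]eq_bigr => n _ do rewrite chord_coefS scalerDl.
rewrite !big_split /=; congr (_ + _).
  rewrite [in RHS]big_ord_recl qint0 mul0r scale0r add0r.
  by apply: eq_bigr => n _; rewrite mulrC.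
rewrite big_ord_recl DeltaPair0_snd scaler0 add0r.
have -> : \sum_(n < m.+2) (Delta_lower n.+1 * chord_coef m n.+1) *: Delta n
          = \sum_(n < m) (Delta_lower n.+1 * chord_coef m n.+1) *: Delta n.
  by rewrite !big_ord_recr /= !chord_coef_gt // !(mulr0, scale0r, addr0).
by apply: eq_bigr => n _; rewrite DeltaPair_snd mulrC.
Qed.

Lemma T_eval_chord_sum f n x : T_eval f n x = chord_sum (2 * f + n) n x.
Proof. by []. Qed.

Theorem theorem2p5 (w : nat -> nat -> K) :
  (forall m : nat, B ^+ m = \sum_(n < m.+1) w m n *: Delta n) ->
  forall m n : nat, (n <= m)%N -> odd m = odd n ->
    w m n = qfact n * T_eval ((m - n)./2) n (q ^+ 2) / (1 - q ^- 2) ^+ ((m - n)./2).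
Proof.
move=> expB_w m n le_nm odd_mn.
have -> : w m n = chord_coef m n.
  apply: subr0_eq; apply: (@Delta_sum_eq0 m (fun k => w m k - chord_coef m k) _ n le_nm).
  under eq_bigr => k _ do rewrite scalerBl.
  by rewrite sumrB -expB_w -expB_Delta subrr.
have m_eq : (2 * ((m - n)./2) + n)%N = m.
  have := odd_double_half (m - n); rewrite oddB // odd_mn addbb -mul2n; lia.
by rewrite T_eval_chord_sum m_eq.
Qed.
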